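(* Let $x\in\mathcal D$ be such that $q_n(t)=\sum_{i:\,t^n_i\le t}(x(t^n_{i+1})-x(t^n_i))^2$ converges pointwise on $[0,\infty)$ to a function $q$ satisfying $q(t)=q^c(t)+\sum_{u\le t}(\Delta x(u))^2$ with $q^c$ continuous and nondecreasing. Then $q_n\to q$ in the Skorokhod $J_1$ topology.
   Context: Let $\pi=(\pi_n)_{n\ge1}$ be a sequence of partitions $\pi_n=(t^n_0,\dots,t^n_{k_n})$ with $0=t^n_0<\dots<t^n_{k_n}<\infty$, $t^n_{k_n}\uparrow\infty$, and mesh tending to $0$ on compacts; sums over $i$ run over $0\le i<k_n$. $\mathcal D$ is the space of càdlàg functions $[0,\infty)\to\mathbb R$, with the Skorokhod $J_1$ topology; $\Delta x(u)=x(u)-x(u-)$. *)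

From HB Require Import structures.
From mathcomp Require Import all_boot all_order all_algebra.
From mathcomp Require Import all_classical all_reals all_analysis.
Set Implicit Arguments. Unset Strict Implicit. Unset Printing Implicit Defensive.
Import Order.TTheory GRing.Theory Num.Theory.
Import numFieldNormedType.Exports.
Local Open Scope classical_set_scope.
Local Open Scope ring_scope.

(* Functions on [0, +oo) are represented as functions R -> R; only their
   values on [0, +oo) matter. *)

(* A sequence of partitions pi_n = (t n 0, ..., t n (k n)). *)
Definition partition_seq {R : realType} (t : nat -> nat -> R) (k : nat -> nat) : Prop :=
  [/\ (forall n, t n 0%N = 0),
      (forall n i, (i < k n)%N -> t n i < t n i.+1),
      (forall n, t n (k n) <= t n.+1 (k n.+1)),
      ((fun n => t n (k n)) @ \oo --> +oo) &
      (forall T : R, forall eps : R, 0 < eps ->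
         \forall n \near \oo, forall i, (i < k n)%N -> t n i <= T ->
            t n i.+1 - t n i <= eps)].

Definition cadlag {R : realType} (f : R -> R) : Prop :=
  (forall s, 0 <= s -> f @ s^'+ --> f s) /\
  (forall s, 0 < s -> cvg (f @ s^'-)).

Definition jump {R : realType} (f : R -> R) (u : R) : R :=
  f u - lim (f @ u^'-).

Definition qv_n {R : realType} (t : nat -> nat -> R) (k : nat -> nat)
  (x : R -> R) (n : nat) (s : R) : R :=
  \sum_(i < k n | t n i <= s) (x (t n i.+1) - x (t n i)) ^+ 2.

Definition time_change {R : realType} (lam : R -> R) : Prop :=
  [/\ lam 0 = 0,
      {within `[0, +oo[, continuous lam},
      (forall s u, 0 <= s -> s < u -> lam s < lam u) &
      (forall v, 0 <= v -> exists2 s, 0 <= s & lam s = v)].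

(* Convergence in the Skorokhod J1 topology on D[0, +oo)
   (Jacod–Shiryaev, Thm VI.1.14 characterization). *)
Definition J1_cvg {R : realType} (f : nat -> R -> R) (g : R -> R) : Prop :=
  exists lam : nat -> R -> R,
    [/\ (forall n, time_change (lam n)),
        (forall eps : R, 0 < eps -> \forall n \near \oo,
            forall s, 0 <= s -> `|lam n s - s| <= eps) &
        (forall T : R, forall eps : R, 0 < eps -> \forall n \near \oo,
            forall s, 0 <= s -> s <= T -> `|f n (lam n s) - g s| <= eps)].

From HB Require Import structures.
From mathcomp Require Import all_boot all_order all_algebra.
From mathcomp Require Import all_classical all_reals all_analysis.
From mathcomp Require Import ring lra.
Import Order.TTheory GRing.Theory Num.Theory.
Import numFieldNormedType.Exports.
Local Open Scope classical_set_scope.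
Local Open Scope ring_scope.

(* Fix a horizon T and a tolerance eps.  Finitely many jumps of x in (0, T + 1],
   collected in F, carry all but eps/4 of the jump part of q, and the continuous
   part qc is uniformly continuous there; adding a fine grid to F gives a finite
   separated set G.  For n large, the mesh of pi_n is below the separation of G,
   q_n is close to q on G, and a jump u of F lying in the step (t_i, t_i+1]
   makes q_n increase at t_i by about Delta x(u)^2.  The time change is
   piecewise linear and sends that jump (or, if there is none, a point just
   right of t_i) to t_i, so that q_n (lam s) = q_n (t_i) on the i-th piece;
   this value is compared with q s through the neighbouring points of G.
   A diagonal argument over (T, eps) = (m, 1/(m+1)) yields J1 convergence. *)

Lemma near_forall_seq {T : eqType} {U : Type} (F : set_system U) {FF : Filter F}
    (s : seq T) (P : T -> U -> Prop) :
  (forall u, u \in s -> \forall n \near F, P u n) ->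
  \forall n \near F, forall u, u \in s -> P u n.
Proof.
elim: s => [_|z s IH Ps]; first exact: filterE.
apply: filterS (filterI (Ps z (mem_head z s)) (IH _)).
  by move=> n [Pz Ps'] u; rewrite inE => /orP[/eqP->|/Ps'].
by move=> u us; apply: Ps; rewrite inE us orbT.
Qed.

Lemma seq_maxP {d} {T : orderType d} (s : seq T) (P : pred T) :
  has P s -> exists m, [/\ m \in s, P m & forall y, y \in s -> P y -> (y <= m)%O].
Proof.
elim: s => //= z s IH.
have [/IH [m [ms Pm mmax]] _|/hasPn Ns /orP[Pz|//]] := boolP (has P s).
  have [Pz|nPz] := boolP (P z); last first.
    exists m; split; rewrite ?inE ?ms ?orbT //.
    by move=> y; rewrite inE => /orP[/eqP->|/mmax//]; rewrite (negbTE nPz).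
  have [zm|mz] := leP z m.
    exists m; split; rewrite ?inE ?ms ?orbT //.
    by move=> y; rewrite inE => /orP[/eqP->|/mmax].
  exists z; split; rewrite ?inE ?eqxx //.
  move=> y; rewrite inE => /orP[/eqP->//|ys /(mmax _ ys) ym].
  exact/ltW/(le_lt_trans ym).
exists z; split; rewrite ?inE ?eqxx //.
by move=> y; rewrite inE => /orP[/eqP->//|/Ns/negP].
Qed.

Lemma seq_minP {d} {T : orderType d} (s : seq T) (P : pred T) :
  has P s -> exists m, [/\ m \in s, P m & forall y, y \in s -> P y -> (m <= y)%O].
Proof. exact: (@seq_maxP _ T^d). Qed.

Lemma seq_sep_point {R : realDomainType} (z : R) (s : seq R) :
  exists2 g : R, 0 < g & forall y, y \in s -> y != z -> g <= `|z - y|.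
Proof.
elim: s => [|y s [g g0 hg]]; first by exists 1.
have [->|yz] := eqVneq y z.
  by exists g => // w; rewrite inE => /orP[/eqP->/eqP//|]; apply: hg.
exists (Num.min g `|z - y|); first by rewrite lt_min g0 normr_gt0 subr_eq0 eq_sym yz.
move=> w; rewrite inE => /orP[/eqP-> _|ws wz]; first by rewrite ge_min lexx orbT.
by rewrite ge_min hg.
Qed.

Lemma seq_sep {R : realDomainType} (s : seq R) :
  exists2 g : R, 0 < g & {in s &, forall x y, x != y -> g <= `|x - y|}.
Proof.
elim: s => [|z s [g g0 hg]]; first by exists 1.
have [g1 g10 hg1] := seq_sep_point z s.
exists (Num.min g g1); first by rewrite lt_min g0 g10.
move=> x y; rewrite !inE => /orP[/eqP->|xs] /orP[/eqP->|ys] xy.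
- by rewrite eqxx in xy.
- by rewrite ge_min hg1 ?orbT // eq_sym.
- by rewrite ge_min distrC hg1 ?orbT.
- by rewrite ge_min hg.
Qed.

Section IncreasingNodes.
Context {R : realDomainType} {K : nat} {a : nat -> R}.

Lemma exists_node_co v : a 0%N <= v -> v < a K -> exists2 j, (j < K)%N & a j <= v < a j.+1.
Proof.
elim: K => [|K' IH] a0v vK; first by move: (le_lt_trans a0v vK); rewrite ltxx.
have [vK'|K'v] := ltP v (a K'); last by exists K' => //; rewrite K'v vK.
by have [j jK hj] := IH a0v vK'; exists j => //; apply: ltnW.
Qed.

Lemma exists_node_oc v : a 0%N < v -> v <= a K -> exists2 j, (j < K)%N & a j < v <= a j.+1.
Proof.
elim: K => [|K' IH] a0v vK; first by move: (lt_le_trans a0v vK); rewrite ltxx.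
have [vK'|K'v] := leP v (a K'); last by exists K' => //; rewrite K'v vK.
by have [j jK hj] := IH a0v vK'; exists j => //; apply: ltnW.
Qed.

Hypothesis a_incr : forall j, (j < K)%N -> a j < a j.+1.

Let nodes_convex :
  {in [pred i | i <= K]%N &, forall i j m, (i < m < j)%N -> m \in [pred i | i <= K]%N}.
Proof. by move=> i j _; rewrite !inE => jK m /andP[_ /ltnW/leq_trans]; apply. Qed.

Lemma nodes_lt i j : (i < j <= K)%N -> a i < a j.
Proof.
move=> /andP[ij jK].
have a_homo := @homo_ltn_in R [pred i | i <= K]%N a (fun x y => x < y)
  (fun y x z => @lt_trans _ _ y x z) nodes_convex (fun m _ mK => a_incr m mK).
by apply: a_homo; rewrite ?inE ?(leq_trans (ltnW ij)).
Qed.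

Lemma nodes_le i j : (i <= j <= K)%N -> a i <= a j.
Proof.
by move=> /andP[]; rewrite leq_eqVlt => /orP[/eqP->//|ij jK]; apply/ltW/nodes_lt; rewrite ij.
Qed.

End IncreasingNodes.

Section PiecewiseLinear.
Context {R : realType} (K : nat) (a b : nat -> R).

(* the interpolation of the nodes (a j, b j), with slope 1 after a K, written as a
   sum of clamped pieces so that continuity is immediate *)
Definition pwlin (s : R) : R :=
  \sum_(0 <= l < K) (b l.+1 - b l) / (a l.+1 - a l) * (Num.min (Num.max s (a l)) (a l.+1) - a l)
  + (Num.max s (a K) - a K).

Lemma pwlin_continuous : continuous pwlin.
Proof.
have id_cont : continuous (@id R) by move=> ?; apply: cvg_id.
have max_cont l := @max_fun_continuous _ R R id (fun=> l) id_cont (@cst_continuous _ _ l).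
have clamp_cont l u := @min_fun_continuous _ R R _ (fun=> u) (max_cont l) (@cst_continuous _ _ u).
move=> s; apply: cvgD; last by apply: cvgB; [exact: max_cont | exact: cvg_cst].
apply: (continuous_big (fun s => add_continuous s)) => l _ y.
by apply: cvgM; [exact: cvg_cst | apply: cvgB; [exact: clamp_cont | exact: cvg_cst]].
Qed.

Hypotheses (a0 : a 0%N = 0) (b0 : b 0%N = 0).
Hypothesis a_incr : forall j, (j < K)%N -> a j < a j.+1.
Hypothesis b_incr : forall j, (j < K)%N -> b j < b j.+1.

Let slope_gt0 j : (j < K)%N -> 0 < (b j.+1 - b j) / (a j.+1 - a j).
Proof. by move=> jK; rewrite divr_gt0 // subr_gt0; [apply: b_incr | apply: a_incr]. Qed.

Let sum_full m s : (m <= K)%N -> a m <= s ->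
  \sum_(0 <= l < m) (b l.+1 - b l) / (a l.+1 - a l) * (Num.min (Num.max s (a l)) (a l.+1) - a l)
  = b m.
Proof.
move=> mK ams; rewrite -[RHS]subr0 -[X in _ - X]b0 -telescope_sumr //.
apply: eq_big_nat => l /andP[_ lm].
have lK : (l < K)%N := leq_trans lm mK.
have al1s : a l.+1 <= s by apply: le_trans ams; apply: (nodes_le a_incr); rewrite lm.
rewrite (max_l (le_trans (ltW (a_incr _ lK)) al1s)) (min_r al1s) divfK //.
by rewrite subr_eq0 gt_eqF // a_incr.
Qed.

Lemma pwlin_piece j s : (j < K)%N -> a j <= s <= a j.+1 ->
  pwlin s = b j + (b j.+1 - b j) / (a j.+1 - a j) * (s - a j).
Proof.
move=> jK /andP[ajs saj1].
have aj1K : a j.+1 <= a K by apply: (nodes_le a_incr); rewrite jK leqnn.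
rewrite /pwlin (max_r (le_trans saj1 aj1K)) subrr addr0.
rewrite (big_cat_nat _ (n := j)) ?(ltnW jK) //= [X in _ + X]big_ltn // sum_full ?(ltnW jK) //.
rewrite (max_l ajs) (min_l saj1) [X in _ + (_ + X)]big1_seq ?addr0 // => l /andP[_].
rewrite mem_index_iota => /andP[jl lK].
have sal : s <= a l by apply: le_trans saj1 _; apply: (nodes_le a_incr); rewrite jl (ltnW lK).
by rewrite (max_r sal) (min_l (ltW (a_incr _ lK))) subrr mulr0.
Qed.

Lemma pwlin_tail s : a K <= s -> pwlin s = b K + (s - a K).
Proof. by move=> aKs; rewrite /pwlin (max_l aKs) sum_full. Qed.

Lemma pwlin_le s u : s <= u -> pwlin s <= pwlin u.
Proof.
move=> su; apply: lerD; last by apply: lerB => //; apply: le_max2.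
apply: ler_sum_nat => l /andP[_ lK]; apply: ler_wpM2l; first exact/ltW/slope_gt0.
by apply: lerB => //; apply: le_min2 => //; apply: le_max2.
Qed.

Lemma pwlin_lt s u : 0 <= s -> s < u -> pwlin s < pwlin u.
Proof.
move=> s0 su; have [saK|aKs] := ltP s (a K); last first.
  by rewrite !pwlin_tail ?(le_trans aKs (ltW su)) // ltrD2l ltrD2r.
have a0s : a 0%N <= s by rewrite a0.
have [j jK /andP[ajs saj1]] := exists_node_co _ a0s saK.
pose w := Num.min u (a j.+1).
have sw : s < w by rewrite lt_min su saj1.
have wu : w <= u by rewrite ge_min lexx.
have waj1 : w <= a j.+1 by rewrite ge_min lexx orbT.
apply: (@lt_le_trans _ _ (pwlin w)); last exact: pwlin_le wu.
rewrite (pwlin_piece _ s jK) ?(pwlin_piece _ w jK); last 2 first.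
- by rewrite waj1 (le_trans ajs (ltW sw)).
- by rewrite ajs (ltW saj1).
by rewrite ltrD2l ltr_pM2l ?ltrD2r //; apply: slope_gt0.
Qed.

Lemma pwlin0 : pwlin 0 = 0.
Proof.
have [K0|K_gt0] := posnP K.
  have aK0 : a K = 0 by rewrite K0.
  by rewrite pwlin_tail aK0 // K0 b0 subrr addr0.
rewrite (pwlin_piece _ 0 K_gt0) a0 ?b0 ?subrr ?mulr0 ?addr0 //.
by rewrite lexx /= -[X in X <= _]a0; apply/ltW/a_incr.
Qed.

Lemma pwlin_time_change : time_change pwlin.
Proof.
split; first exact: pwlin0.
- exact/continuous_subspaceT/pwlin_continuous.
- exact: pwlin_lt.
move=> v v0.
have aK0 : 0 <= a K by rewrite -a0; apply: (nodes_le a_incr); rewrite leq0n leqnn.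
have bK0 : 0 <= b K by rewrite -b0; apply: (nodes_le b_incr); rewrite leq0n leqnn.
have pw_cont : {within `[0, a K + v], continuous pwlin}.
  exact/continuous_subspaceT/pwlin_continuous.
have v_range : Num.min (pwlin 0) (pwlin (a K + v)) <= v <= Num.max (pwlin 0) (pwlin (a K + v)).
  rewrite pwlin0 pwlin_tail; last by rewrite lerDl.
  by rewrite addrAC subrr add0r ge_min v0 le_max lerDr bK0 orbT.
have [c /[!in_itv] /andP[c0 _] <-] := IVT (addr_ge0 aK0 v0) pw_cont v_range.
by exists c.
Qed.

Lemma pwlin_itv j s : (j < K)%N -> a j <= s < a j.+1 -> b j <= pwlin s < b j.+1.
Proof.
move=> jK /andP[ajs saj1]; rewrite (pwlin_piece _ s jK); last by rewrite ajs ltW.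
have da : 0 < a j.+1 - a j by rewrite subr_gt0 a_incr.
have db : 0 < b j.+1 - b j by rewrite subr_gt0 b_incr.
have ds : s - a j < a j.+1 - a j by rewrite ltrD2r.
rewrite lerDl mulr_ge0 ?subr_ge0 //=; last exact/ltW/slope_gt0.
rewrite -ltrBrDl mulrAC ltr_pdivrMr // ltr_pM2l //.
Qed.

Lemma pwlin_dev D : (forall j, (j <= K)%N -> `|b j - a j| <= D) ->
  forall s, 0 <= s -> `|pwlin s - s| <= D.
Proof.
move=> bD s s0; have [saK|aKs] := ltP s (a K); last first.
  rewrite pwlin_tail // (_ : b K + (s - a K) - s = b K - a K); first exact: bD.
  by ring.
have a0s : a 0%N <= s by rewrite a0.
have [j jK /andP[ajs saj1]] := exists_node_co _ a0s saK.
rewrite (pwlin_piece _ s jK); last by rewrite ajs ltW.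
have da : 0 < a j.+1 - a j by rewrite subr_gt0 a_incr.
pose th := (s - a j) / (a j.+1 - a j).
have th0 : 0 <= th by apply: divr_ge0; [rewrite subr_ge0 | apply: ltW].
have th1 : th <= 1 by rewrite ler_pdivrMr // mul1r lerD2r ltW.
(* the error is a convex combination of the node errors b j - a j and b j.+1 - a j.+1 *)
have -> : b j + (b j.+1 - b j) / (a j.+1 - a j) * (s - a j) - s =
    (1 - th) * (b j - a j) + th * (b j.+1 - a j.+1).
  by rewrite /th; field; rewrite gt_eqF.
have e0 := bD j (ltnW jK); have e1 := bD j.+1 jK.
clearbody th; apply: (le_trans (ler_normD _ _)).
rewrite !normrM (ger0_norm th0) (ger0_norm (_ : 0 <= 1 - th)) ?subr_ge0 //.
rewrite [X in _ <= X](_ : D = (1 - th) * D + th * D); last by ring.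
by apply: lerD; apply: ler_wpM2l; rewrite ?subr_ge0.
Qed.

End PiecewiseLinear.

Definition J1_close {R : realType} (fn g : R -> R) (T eps : R) (lam : R -> R) : Prop :=
  [/\ time_change lam, (forall s, 0 <= s -> `|lam s - s| <= eps) &
      (forall s, 0 <= s -> s <= T -> `|fn (lam s) - g s| <= eps)].

Lemma time_change_id {R : realType} : time_change (@id R).
Proof.
split => //; last by move=> v v0; exists v.
by apply: continuous_subspaceT => s; apply: cvg_id.
Qed.

Lemma J1_close_le {R : realType} (fn g : R -> R) (T T' eps eps' : R) (lam : R -> R) :
  T' <= T -> eps <= eps' -> J1_close fn g T eps lam -> J1_close fn g T' eps' lam.
Proof.
move=> T'T epsE [lam_tc lam_dev lam_close]; split => // [s s0|s s0 sT'].
  exact: le_trans (lam_dev s s0) epsE.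
exact: le_trans (lam_close s s0 (le_trans sT' T'T)) epsE.
Qed.

Lemma J1_cvg_diagonal {R : realType} (f : nat -> R -> R) (g : R -> R)
    (lam : nat -> R -> R) (M : nat -> nat) :
  (forall n, time_change (lam n)) ->
  (forall m0, \forall n \near \oo,
     (m0 <= M n)%N /\ J1_close (f n) g (M n)%:R (M n).+1%:R^-1 (lam n)) ->
  J1_cvg f g.
Proof.
move=> lam_tc M_close; exists lam; split => [//|eps eps_gt0|T eps eps_gt0].
  have [m0 m0_eps] := filter_ex (near_infty_natSinv_lt (PosNum eps_gt0)).
  near=> n; have [m0M [_ dev _]] :
      (m0 <= M n)%N /\ J1_close (f n) g (M n)%:R (M n).+1%:R^-1 (lam n).
    by near: n; apply: M_close.
  move=> s s0; apply: le_trans (dev s s0) _; apply/ltW/(le_lt_trans _ m0_eps).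
  by rewrite lef_pV2 ?posrE // ler_nat.
have [m0 [Tm0 m0_eps]] :=
  filter_ex (filterI (nbhs_infty_ger T) (near_infty_natSinv_lt (PosNum eps_gt0))).
near=> n; have [m0M [_ _ close]] :
    (m0 <= M n)%N /\ J1_close (f n) g (M n)%:R (M n).+1%:R^-1 (lam n).
  by near: n; apply: M_close.
move=> s s0 sT; apply: le_trans (close s s0 _) _.
  by apply: le_trans sT (le_trans Tm0 _); rewrite ler_nat.
by apply/ltW/(le_lt_trans _ m0_eps); rewrite lef_pV2 ?posrE // ler_nat.
Unshelve. all: by end_near.
Qed.

Lemma J1_cvg_from_close {R : realType} (f : nat -> R -> R) (g : R -> R) :
  (forall T eps : R, 0 <= T -> 0 < eps ->
    \forall n \near \oo, exists lam, J1_close (f n) g T eps lam) ->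
  J1_cvg f g.
Proof.
move=> close.
pose good n m := exists lam, J1_close (f n) g m%:R m.+1%:R^-1 lam.
have good_le n m m' : (m' <= m)%N -> good n m -> good n m'.
  move=> m'm [lam lamP]; exists lam; apply: J1_close_le lamP; first by rewrite ler_nat.
  by rewrite lef_pV2 ?posrE // ler_nat.
have /choice [lam lamP] : forall nm : nat * nat, exists lam : R -> R,
    time_change lam /\ (good nm.1 nm.2 -> J1_close (f nm.1) g nm.2%:R nm.2.+1%:R^-1 lam).
  move=> [n m]; have [[l lP]|ngood] := pselect (good n m); first by exists l; case: lP.
  by exists id; split => [|/ngood//]; apply: time_change_id.
pose M n := \max_(m < n.+1 | `[< good n m >]) m.
apply: (J1_cvg_diagonal _ _ (fun n => lam (n, M n)) M) => [n|m0]; first by case: (lamP (n, M n)).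
have m0_pos : 0 < m0.+1%:R^-1 :> R by rewrite invr_gt0.
near=> n.
have gm0 : good n m0 by near: n; apply: close; rewrite ?ler0n.
have m0n : (m0 < n.+1)%N by near: n; exists m0 => // n /= m0n; rewrite ltnS.
split; first exact: (@leq_bigmax_cond _ (fun m : 'I_n.+1 => `[< good n m >])
  (fun m => nat_of_ord m) (Ordinal m0n) (asboolT gm0)).
apply: (proj2 (lamP (n, M n))); apply: (big_ind (good n)); first exact: good_le gm0.
  by move=> m1 m2 g1 g2; rewrite /maxn; case: ifP.
by move=> m /asboolP.
Unshelve. all: by end_near.
Qed.

Lemma nondecreasing_levels {R : realType} (f : R -> R) (T l : R) : 0 <= T -> 0 <= l ->
  {within `[0, T], continuous f} -> f 0 <= f T ->
  exists c : nat -> R, forall m : nat, m%:R * l <= f T - f 0 ->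
    0 <= c m <= T /\ f (c m) = f 0 + m%:R * l.
Proof.
move=> T0 l0 fc f0T.
suff /choice[c cP] : forall m : nat, exists c : R, m%:R * l <= f T - f 0 ->
    0 <= c <= T /\ f c = f 0 + m%:R * l by exists c.
move=> m; have [ml|] := boolP (m%:R * l <= f T - f 0); last by exists 0.
have [|y /[!in_itv] /= yT fy] := IVT T0 fc (v := f 0 + m%:R * l).
  by rewrite (min_l f0T) (max_r f0T) lerDl mulr_ge0 //= -lerBrDl.
by exists y.
Qed.

Lemma nondecreasing_unif_cont {R : realType} (f : R -> R) (T eta : R) : 0 <= T -> 0 < eta ->
  {within `[0, T], continuous f} -> (forall s u, 0 <= s -> s <= u -> u <= T -> f s <= f u) ->
  exists2 dl : R, 0 < dl &
    forall a b, 0 <= a -> a <= b -> b <= T -> b - a <= dl -> f b - f a <= eta.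
Proof.
move=> T0 eta0 fc fm; pose l := eta / 2.
have l0 : 0 < l by rewrite divr_gt0.
have f0T : f 0 <= f T by apply: fm.
have [c cP] := nondecreasing_levels _ _ _ T0 (ltW l0) fc f0T.
pose N := Num.truncn ((f T - f 0) / l).
have [g g0 gP] := seq_sep [seq c m | m <- iota 0 N.+1].
exists (g / 2); first by rewrite divr_gt0.
move=> a b a0 ab bT bad; rewrite leNgt; apply/negP => ab_eta.
have fa0 : 0 <= f a - f 0 by rewrite subr_ge0; apply: fm => //; apply: le_trans ab bT.
have /andP[lo hi] := truncn_itv (divr_ge0 fa0 (ltW l0)).
rewrite ler_pdivlMr // ltr_pdivrMr // in lo hi.
(* the consecutive levels m and m.+1 lie strictly between f a and f b *)
set m := (Num.truncn _).+1 in hi.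
have ml : m.+1%:R * l = m%:R * l + l by rewrite -natr1 mulrDl mul1r.
have fb_lvl : m.+1%:R * l < f b - f 0.
  rewrite ml /m -natr1 mulrDl mul1r; rewrite /l in lo ab_eta *; lra.
have fT : f b <= f T by apply: fm => //; apply: le_trans ab.
have lvl_le : forall j, (j <= m.+1)%N -> j%:R * l <= f T - f 0.
  move=> j jm; apply: (le_trans _ (lerB fT (lexx (f 0)))).
  by apply: le_trans (ltW fb_lvl); rewrite ler_pM2r // ler_nat.
have mN : (m.+1 <= N)%N.
  rewrite truncn_ge_nat; last by apply: divr_ge0; [rewrite subr_ge0 | apply: ltW].
  by rewrite ler_pdivlMr // lvl_le.
have in_ab y : 0 <= y <= T -> f a < f y < f b -> a < y < b.
  move=> /andP[y0 yT] /andP[fay fyb]; rewrite !ltNge; apply/andP; split; apply/negP => hy.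
    by move: fay; rewrite ltNge (fm y a y0 hy (le_trans ab bT)).
  by move: fyb; rewrite ltNge (fm b y (le_trans a0 ab) hy yT).
have [c0 fc0] := cP m (lvl_le _ (leqnSn _)).
have [c1 fc1] := cP m.+1 (lvl_le _ (leqnn _)).
have /andP[am mb] : a < c m < b by apply: in_ab; rewrite // fc0 ml in fc1 *; lra.
have /andP[am1 m1b] : a < c m.+1 < b by apply: in_ab; rewrite // fc1 ml in fc0 *; lra.
have cmm1 : c m != c m.+1 by apply/eqP => e; move: fc1; rewrite -e fc0 ml; lra.
have memc j : (j <= N)%N -> c j \in [seq c m | m <- iota 0 N.+1].
  by move=> jN; apply: map_f; rewrite mem_iota add0n ltnS.
have := gP _ _ (memc _ (ltnW mN)) (memc _ mN) cmm1.
have : `|c m - c m.+1| < b - a by rewrite ltr_norml; apply/andP; split; lra.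
lra.
Qed.

Section JumpMass.
Context {R : realType} (J Phi : R -> R).
Hypothesis J_ge0 : forall u, 0 <= J u.
Hypothesis Phi_esum : forall s, 0 <= s ->
  (\esum_(u in [set u : R | (0 < u <= s)%R]) (J u)%:E = (Phi s)%:E)%E.

Lemma sum_le_esum (F : seq R) (A : set R) : uniq F ->
  ((\sum_(u <- F | `[< A u >]) J u)%:E <= \esum_(u in A) (J u)%:E)%E.
Proof.
move=> F_uniq; apply: esum_ge; exists [set` [seq u <- F | `[< A u >]]].
  split; first exact: finite_seq.
  by move=> u /=; rewrite mem_filter => /andP[/asboolP].
by rewrite -fsbig_seq ?filter_uniq // big_filter sumEFin.
Qed.

Lemma esum_Ioc a b : 0 <= a -> a <= b ->
  (\esum_(u in [set u : R | (a < u <= b)%R]) (J u)%:E = (Phi b - Phi a)%:E)%E.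
Proof.
move=> a0 ab.
have := esumID [set u : R | 0 < u <= a] [set u : R | 0 < u <= b] (fun u => (J u)%:E)
  (fun u _ => J_ge0 u : (0 <= (J u)%:E)%E).
have -> : [set u : R | 0 < u <= b] `&` [set u | 0 < u <= a] = [set u | 0 < u <= a].
  apply/seteqP; split => u /=; first by case.
  by move=> /andP[u0 ua]; rewrite u0 (le_trans ua ab).
have -> : [set u : R | 0 < u <= b] `&` ~` [set u | 0 < u <= a] = [set u | a < u <= b].
  apply/seteqP; split => u /=.
    by move=> [/andP[u0 ub]]; rewrite u0 /= ltNge => /negP ->.
  move=> /andP[au ub]; rewrite (le_lt_trans a0 au) ub; split => // /andP[_].
  by rewrite leNgt au.
rewrite !Phi_esum ?(le_trans a0 ab) //.
case: (\esum_(u in _) _)%E => [r||] //= /eqP; rewrite eqe => /eqP ->.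
by rewrite addrAC subrr add0r.
Qed.

Lemma esum_finite_approx (T eta : R) : 0 < eta -> 0 <= T ->
  exists F : seq R, [/\ uniq F, (forall u, u \in F -> 0 < u <= T) &
    forall a b, 0 <= a -> a <= b -> b <= T ->
      Phi b - Phi a <= \sum_(u <- F | a < u <= b) J u + eta].
Proof.
move=> eta0 T0.
have : ((Phi T - eta)%:E < \esum_(u in [set u : R | (0 < u <= T)%R]) (J u)%:E)%E.
  by rewrite Phi_esum // lte_fin gtrDl oppr_lt0.
rewrite /esum => /ereal_sup_gt [_ [X [finX XT]] <-].
rewrite fsbig_finite //= sumEFin lte_fin.
set F := finmap.enum_fset (fset_set X) => F_big.
have FX u : u \in F -> X u by rewrite /F in_fset_set // inE.
exists F; split => [||a b a0 ab bT]; first exact: finmap.fset_uniq.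
  by move=> u /FX /XT.
pose rest := [set u : R | 0 < u <= T] `&` ~` [set u | a < u <= b].
have := esumID [set u : R | a < u <= b] [set u : R | 0 < u <= T] (fun u => (J u)%:E)
  (fun u _ => J_ge0 u : (0 <= (J u)%:E)%E).
have -> : [set u : R | 0 < u <= T] `&` [set u | a < u <= b] = [set u | a < u <= b].
  apply/seteqP; split => u /=; first by case.
  by move=> /andP[au ub]; rewrite au ub (le_lt_trans a0 au) (le_trans ub bT).
rewrite Phi_esum // (esum_Ioc _ _ a0 ab).
have := sum_le_esum F rest (finmap.fset_uniq _ : uniq F).
rewrite -/rest; case: (\esum_(u in rest) _)%E => [r||] //=.
rewrite lee_fin => rest_ge /eqP; rewrite eqe => /eqP PhiT.
rewrite (bigID (fun u => a < u <= b)) /= in F_big.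
suff rest_eq : \sum_(u <- F | ~~ (a < u <= b)) J u = \sum_(u <- F | `[< rest u >]) J u.
  by rewrite rest_eq in F_big; lra.
rewrite big_seq_cond [RHS]big_seq_cond; apply: eq_bigl => u.
apply/andP/andP => [[uF nab]|[uF /asboolP[_ nab]]]; split => //; last by apply/negP.
by apply/asboolP; split; [exact: XT (FX _ uF) | apply/negP].
Qed.

End JumpMass.

Lemma jump_sq_near {R : realType} (x : R -> R) (u g : R) : 0 < g ->
  x @ u^'+ --> x u -> cvg (x @ u^'-) ->
  exists2 rho : R, 0 < rho & forall v w, u - rho < v -> v < u -> u <= w -> w < u + rho ->
    jump x u ^+ 2 - g <= (x w - x v) ^+ 2.
Proof.
move=> g0 x_right x_left; set j := jump x u; set L := lim (x @ u^'-).
pose th := g / (4 * `|j| + 4).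
have d0 : 0 < 4 * `|j| + 4 by have := normr_ge0 j; lra.
have th0 : 0 < th by apply: divr_gt0.
have g_th : g = th * (4 * `|j| + 4) by rewrite /th divfK // gt_eqF.
move/cvgrPdist_lt/(_ th th0)/nbhs_ballP: x_right => [e1 e1_gt0 near_right].
move/cvgrPdist_lt/(_ th th0)/nbhs_ballP: x_left => [e2 e2_gt0 near_left].
exists (Num.min e1 e2) => [|v w uv vu uw wu]; first by rewrite lt_min e1_gt0 e2_gt0.
have m1 : Num.min e1 e2 <= e1 by rewrite ge_min lexx.
have m2 : Num.min e1 e2 <= e2 by rewrite ge_min lexx orbT.
have hv : `|L - x v| < th.
  have v_ball : ball u e2 v by rewrite /ball /= ger0_norm; lra.
  exact: near_left v_ball vu.
have hw : `|x u - x w| <= th.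
  have [<-|wu'] := eqVneq u w; first by rewrite subrr normr0 ltW.
  apply/ltW/near_right; last by rewrite lt_neqAle wu' uw.
  by rewrite /ball /= distrC ger0_norm ?subr_ge0 //; lra.
(* x w - x v = j + z with |z| <= 2 th, and j^2 - (j + z)^2 <= 2 |j| |z| <= g *)
have /andP[z_lo z_hi] : - (2 * th) <= x w - x v - j <= 2 * th.
  rewrite -ler_norml (_ : x w - x v - j = (L - x v) - (x u - x w)); last first.
    by rewrite /j /jump -/L; ring.
  by apply: (le_trans (ler_normB _ _)); rewrite mulr2n mulrDl mul1r lerD // ltW.
have /andP[j_lo j_hi] : - `|j| <= j <= `|j| by rewrite -ler_norml.
rewrite -[x w - x v](subrK j); set z := x w - x v - j in z_lo z_hi *.
have j_ge0 := normr_ge0 j.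
nra.
Qed.

Lemma big_seq_unique {T : eqType} {V : nmodType} (r : seq T) (P : pred T) (f : T -> V) c :
  uniq r -> c \in r -> P c -> {in r, forall u, P u -> u = c} ->
  \sum_(u <- r | P u) f u = f c.
Proof.
move=> r_uniq cr Pc r_c; rewrite big_seq_cond (eq_bigl (pred1 c)) => [|u /=].
  by rewrite -big_filter filter_pred1_uniq // big_seq1.
by apply/andP/eqP => [[ur /(r_c _ ur)]|->].
Qed.

Definition qv {R : realType} (t : nat -> R) (k : nat) (x : R -> R) (s : R) : R :=
  \sum_(i < k | t i <= s) (x (t i.+1) - x (t i)) ^+ 2.

Section QuadraticVariationSum.
Context {R : realType} (t : nat -> R) (k : nat) (x : R -> R).

Lemma qv_le s u : s <= u -> qv t k x s <= qv t k x u.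
Proof.
move=> su; rewrite /qv [leLHS]big_mkcond [leRHS]big_mkcond /=.
apply: ler_sum => i _; case: ifP => [tis|_]; first by rewrite (le_trans tis su).
by case: ifP => // _; apply: sqr_ge0.
Qed.

Lemma qv_jump i v : (i < k)%N -> v < t i ->
  qv t k x v + (x (t i.+1) - x (t i)) ^+ 2 <= qv t k x (t i).
Proof.
move=> ik vti; rewrite /qv [leRHS](bigD1 (Ordinal ik)) //= addrC lerD2r.
rewrite [leLHS]big_mkcond [leRHS]big_mkcond /=; apply: ler_sum => j _.
case: ifP => [tjv|_]; last by case: ifP => // _; apply: sqr_ge0.
rewrite (le_trans tjv (ltW vti)) /=; case: eqP => // ji.
by move: tjv; rewrite ji /= leNgt vti.
Qed.

Hypothesis t_incr : forall j, (j < k)%N -> t j < t j.+1.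

Lemma qv_step i v : (i < k)%N -> t i <= v < t i.+1 -> qv t k x v = qv t k x (t i).
Proof.
move=> ik /andP[tiv vti1]; apply: eq_bigl => j.
have [ji|ij] := leqP j i.
  have tji : t j <= t i by apply: (nodes_le t_incr); rewrite ji (ltnW ik).
  by rewrite tji (le_trans tji tiv).
have ti1j : t i.+1 <= t j by apply: (nodes_le t_incr); rewrite ij (ltnW (ltn_ord j)).
by rewrite !leNgt (lt_le_trans vti1 ti1j) (lt_le_trans (t_incr _ ik) ti1j).
Qed.

End QuadraticVariationSum.

Definition two_sided_net {R : realType} (G : seq R) (h T : R) : Prop :=
  forall v, 0 <= v <= T ->
    (exists2 g, g \in G & v - h <= g <= v) /\ (exists2 g, g \in G & v <= g <= v + h).

Section QVTimeChange.
Context {R : realType} (t : nat -> R) (k : nat) (x q : R -> R) (F G : seq R).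
Context (T eps eta h mu : R).

Let Q := qv t k x.
Let J u := jump x u ^+ 2.
Let Fmass a b := \sum_(u <- F | a < u <= b) J u.

Hypotheses (t0 : t 0%N = 0) (t_incr : forall j, (j < k)%N -> t j < t j.+1).
Hypothesis mesh : forall j, (j < k)%N -> t j <= T + 1 -> t j.+1 - t j <= mu.
Hypothesis horizon : T + 2 < t k.
Hypotheses (T_ge0 : 0 <= T) (mu_gt0 : 0 < mu) (mu_h : mu <= h) (h_le1 : h <= 1).
Hypotheses (mu_eps : mu <= eps) (eta_eps : 4 * eta <= eps).
Hypothesis G_sep : {in G &, forall g g', g != g' -> mu < `|g - g'|}.
Hypotheses (G_ge0 : forall g, g \in G -> 0 <= g) (G0 : 0 \in G).
Hypothesis G_net : two_sided_net G h T.
Hypotheses (F_uniq : uniq F) (F_G : {subset F <= G}).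
Hypothesis F_range : forall u, u \in F -> 0 < u <= T + 1.
Hypothesis Q_near : forall g, g \in G -> `|q g - Q g| <= eta.
Hypothesis jump_dsq : forall u, u \in F -> forall j, (j < k)%N -> t j < u <= t j.+1 ->
  J u - eta <= (x (t j.+1) - x (t j)) ^+ 2.
Hypothesis q_incr : forall a b, 0 <= a -> a <= b -> b <= T + 1 -> b - a <= 3 * h ->
  q b - q a <= Fmass a b + 2 * eta.

Let eta_ge0 : 0 <= eta.
Proof. exact: le_trans (normr_ge0 _) (Q_near _ G0). Qed.

Let t_ge0 j : (j <= k)%N -> 0 <= t j.
Proof. by move=> jk; rewrite -t0; apply: (nodes_le t_incr); rewrite leq0n. Qed.

Lemma G_step_unique j g g' : (j < k)%N -> t j <= T + 1 -> g \in G -> g' \in G ->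
  t j <= g <= t j.+1 -> t j <= g' <= t j.+1 -> g = g'.
Proof.
move=> jk jT gG g'G /andP[g1 g2] /andP[g'1 g'2]; apply/eqP/contraT => gg'.
have := G_sep _ _ gG g'G gg'; have := mesh _ jk jT.
have : `|g - g'| <= t j.+1 - t j by rewrite ler_norml; apply/andP; split; lra.
lra.
Qed.

Lemma Fmass_le_qv a b a' b' : a' <= b' ->
  {in F &, forall u v, a < u <= b -> a < v <= b -> u = v} ->
  (forall u, u \in F -> a < u <= b ->
    exists2 j, (j < k)%N & a' < t j <= b' /\ t j < u <= t j.+1) ->
  Q a' + Fmass a b - eta <= Q b'.
Proof.
move=> ab' F_ab_unique F_step.
have [/hasP[c cF c_ab]|F_ab] := boolP (has (fun u => a < u <= b) F); last first.
  by rewrite /Fmass big_hasC // addr0 lerBlDr ler_wpDr // qv_le.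
have [j jk [/andP[a'j jb'] cj]] := F_step c cF c_ab.
rewrite /Fmass (big_seq_unique F (fun u => a < u <= b) J c F_uniq cF c_ab) => [|u uF u_ab].
  have := qv_jump t k x _ _ jk a'j; have := qv_le t k x _ _ jb'; have := jump_dsq _ cF _ jk cj.
  by rewrite /Q; lra.
exact: F_ab_unique.
Qed.

Lemma qv_upper i s : (i < k)%N -> t i <= s <= T ->
  (forall u, u \in F -> s < u -> t i.+1 < u) -> Q (t i) <= q s + 4 * eta.
Proof.
move=> ik /andP[tis sT] F_after.
have s0 : 0 <= s := le_trans (t_ge0 _ (ltnW ik)) tis.
have [_ [g gG /andP[sg gsh]]] : _ /\ _ := G_net s (introT andP (conj s0 sT)).
have /seq_minP[gb [gbG sgb gb_min]] : has (fun g => s <= g) G by apply/hasP; exists g.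
have gbh : gb <= s + h := le_trans (gb_min _ gG sg) gsh.
(* gb is the first point of G after s, so the only jump in (s, gb] can be gb itself *)
have F_gb u : u \in F -> s < u <= gb -> u = gb.
  move=> uF /andP[su ugb]; apply/eqP; rewrite eq_le ugb.
  by apply: gb_min; [apply: F_G | apply: ltW].
have F_step u : u \in F -> s < u <= gb ->
    exists2 j, (j < k)%N & t i < t j <= gb /\ t j < u <= t j.+1.
  move=> uF /andP[su ugb].
  have [||j jk /andP[tju utj1]] := @exists_node_oc _ k t u; first by rewrite t0; lra.
    by have := horizon; have := h_le1; lra.
  exists j => //; rewrite tju utj1 (le_trans (ltW tju) ugb) andbT; split => //.
  apply: (nodes_lt t_incr); rewrite (ltnW jk) andbT ltnNge; apply/negP => ji.
  have : t j.+1 <= t i.+1 by apply: (nodes_le t_incr); rewrite ltnS ji ik.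
  by have := F_after _ uF su; lra.
have := Fmass_le_qv _ _ _ _ (le_trans tis sgb)
  (fun u v uF vF u_in v_in => etrans (F_gb _ uF u_in) (esym (F_gb _ vF v_in))) F_step.
have gbT : gb <= T + 1 by have := h_le1; lra.
have gb_s : gb - s <= 3 * h by have := mu_h; have := mu_gt0; lra.
have := q_incr _ _ s0 sgb gbT gb_s.
have := qv_le t k x _ _ (le_trans tis sgb).
have /[!ler_norml] /andP[] := Q_near _ gbG.
rewrite /Q; lra.
Qed.

Lemma qv_lower i s : (i < k)%N -> t i <= s <= T -> s - t i <= 2 * h ->
  (forall u, u \in F -> t i < u <= s -> u <= t i.+1) -> q s <= Q (t i) + 4 * eta.
Proof.
move=> ik /andP[tis sT] sh F_before.
have ti0 : 0 <= t i := t_ge0 _ (ltnW ik).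
have tiT : t i <= T + 1 by have := T_ge0; lra.
have [[g gG /andP[tig gti]] _] : _ /\ _ := G_net _ (introT andP (conj ti0 (le_trans tis sT))).
have /seq_maxP[ga [gaG gati ga_max]] : has (fun g => g <= t i) G by apply/hasP; exists g.
have ga_lo : t i - h <= ga := le_trans tig (ga_max _ gG gti).
(* ga is the last point of G before t i, so every jump in (ga, s] lies in (t i, t i.+1] *)
have F_step u : u \in F -> ga < u <= s -> t i < u <= t i.+1.
  move=> uF /andP[gau us]; have tiu : t i < u.
    by rewrite ltNge; apply/negP => /(ga_max _ (F_G _ uF)); rewrite leNgt gau.
  by rewrite tiu F_before // tiu.
have F_unique : {in F &, forall u v, ga < u <= s -> ga < v <= s -> u = v}.
  move=> u v uF vF /(F_step _ uF) /andP[/ltW tiu uti] /(F_step _ vF) /andP[/ltW tiv vti].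
  by apply: (G_step_unique _ _ _ ik tiT (F_G _ uF) (F_G _ vF)); rewrite ?tiu ?tiv.
have F_at_i u : u \in F -> ga < u <= s ->
    exists2 j, (j < k)%N & ga < t j <= t i /\ t j < u <= t j.+1.
  move=> uF u_in; have /andP[tiu uti] := F_step _ uF u_in; have /andP[gau _] := u_in.
  exists i => //; rewrite lexx tiu uti andbT lt_neqAle gati andbT; split => //.
  apply/eqP => ga_ti; suff ga_u : ga = u by move: gau; rewrite ga_u ltxx.
  apply: (G_step_unique _ _ _ ik tiT gaG (F_G _ uF)); last by rewrite (ltW tiu) uti.
  by rewrite ga_ti lexx ltW // t_incr.
have := Fmass_le_qv _ _ _ _ gati F_unique F_at_i.
have sT1 : s <= T + 1 by lra.
have s_ga : s - ga <= 3 * h by lra.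
have := q_incr _ _ (G_ge0 _ gaG) (le_trans gati tis) sT1 s_ga.
have /[!ler_norml] /andP[] := Q_near _ gaG.
rewrite /Q; lra.
Qed.

(* [node j] is the jump of F in (t j, t j.+1] if there is one, and a point
   of (t j, t j.+1] within eps of t j otherwise *)
Let node j := nth (Num.min (t j.+1) (t j + eps)) F (find (fun u => t j < u <= t j.+1) F).

Let node_step j : (j < k)%N -> t j < node j <= t j.+1 /\ node j - t j <= eps.
Proof.
move=> jk; rewrite /node; set P := fun u => _; set d := Num.min _ _.
have [F_j|F_j] := boolP (has P F).
  have /andP[tju utj1] : P (nth d F (find P F)) := nth_find d F_j.
  have F_size : (find P F < size F)%N by rewrite -has_find.
  have /andP[_ uT] := F_range _ (mem_nth d F_size).
  have := mesh _ jk (le_trans (ltW tju) uT); have := mu_eps.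
  by rewrite tju utj1; split => //; lra.
rewrite nth_default; last by rewrite leqNgt -has_find.
have d_lo : t j < d by rewrite lt_min t_incr //= ltrDl; have := mu_eps; have := mu_gt0; lra.
have d_hi : d <= t j.+1 by rewrite ge_min lexx.
have d_eps : d <= t j + eps by rewrite ge_min lexx orbT.
by rewrite d_lo d_hi; split => //; lra.
Qed.

Let F_node j u : (j < k)%N -> u \in F -> t j < u <= t j.+1 -> u = node j.
Proof.
move=> jk uF u_in; have /andP[tju utj1] := u_in; have /andP[_ uT] := F_range _ uF.
have [/andP[tjn ntj1] _] := node_step _ jk.
have nF : node j \in F.
  by rewrite /node mem_nth // -has_find; apply/hasP; exists u.
apply: (G_step_unique _ _ _ jk (le_trans (ltW tju) uT) (F_G _ uF) (F_G _ nF)).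
  by rewrite (ltW tju) utj1.
by rewrite (ltW tjn) ntj1.
Qed.

(* the nodes of the time change: [lam (a j) = t j] *)
Let a j := if j is _.+1 then node j else 0.

Let a_step j : (j < k)%N -> t j <= a j <= t j.+1 /\ a j - t j <= eps.
Proof.
case: j => [|j] jk /=; last by have [/andP[/ltW -> ->] ->] := node_step _ jk.
by rewrite t0 lexx t_ge0 // subrr; have := mu_eps; have := mu_gt0; split => //; lra.
Qed.

(* a jump in (t 0, t 1] would share that step with the point 0 of G *)
Let F_eq_a j u : (j < k)%N -> u \in F -> t j < u <= t j.+1 -> u = a j.
Proof.
case: j => [|j] jk uF u_in; last exact: F_node.
have /andP[t0u ut1] := u_in.
have t0T : t 0%N <= T + 1 by rewrite t0; have := T_ge0; lra.
have u0 : 0 = u.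
  apply: (G_step_unique _ _ _ jk t0T G0 (F_G _ uF)); last by rewrite (ltW t0u) ut1.
  by rewrite t0 lexx t_ge0.
by move: t0u; rewrite t0 -u0 ltxx.
Qed.

Let a_gt j : (0 < j)%N -> (j < k)%N -> t j < a j.
Proof. by case: j => // j _ jk; have [/andP[]] := node_step _ jk. Qed.

Let qv_close_on_step i s : (i.+1 < k)%N -> a i <= s < a i.+1 -> s <= T ->
  `|Q (t i) - q s| <= eps.
Proof.
move=> i1k /andP[ais sai1] sT; have ik := ltnW i1k.
have [/andP[tiai _] _] := a_step _ ik; have [/andP[_ ai1ti2] _] := a_step _ i1k.
have tis := le_trans tiai ais.
have tiT : t i <= T + 1 by have := T_ge0; lra.
have ti1T : t i.+1 <= T + 1 by have := mesh _ ik tiT; have := mu_h; have := h_le1; lra.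
have sh : s - t i <= 2 * h.
  by have := mesh _ ik tiT; have := mesh _ i1k ti1T; have := mu_h; lra.
have up : Q (t i) <= q s + 4 * eta.
  apply: (qv_upper _ _ ik); first by rewrite tis sT.
  move=> u uF su; rewrite ltNge; apply/negP => uti1.
  have := F_eq_a _ _ ik uF; rewrite (le_lt_trans tis su) uti1 => /(_ isT) ua.
  by move: su; rewrite ua ltNge ais.
have lo : q s <= Q (t i) + 4 * eta.
  apply: (qv_lower _ _ ik) => //; first by rewrite tis sT.
  move=> u uF /andP[tiu us]; rewrite leNgt; apply/negP => ti1u.
  have := F_eq_a _ _ i1k uF; rewrite ti1u (le_trans us (ltW (lt_le_trans sai1 ai1ti2))).
  by move=> /(_ isT) ua; move: us; rewrite ua leNgt sai1.
by rewrite ler_norml; have := eta_eps; lra.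
Qed.

Lemma qv_J1_close : exists lam, J1_close Q q T eps lam.
Proof.
have k_gt0 : (0 < k)%N.
  by rewrite lt0n; apply/eqP => k0; move: horizon; rewrite k0 t0; have := T_ge0; lra.
have kK : k = k.-1.+1 by rewrite prednK.
set K := k.-1 in kK; have Kk : (K < k)%N by rewrite kK.
have tK : T + 1 < t K.
  rewrite ltNge; apply/negP => tKT; have := mesh _ Kk tKT; rewrite -kK.
  by have := horizon; have := mu_h; have := h_le1; lra.
have K_gt0 : (0 < K)%N.
  by rewrite lt0n; apply/eqP => K0; move: tK; rewrite K0 t0; have := T_ge0; lra.
have a_incr j : (j < K)%N -> a j < a j.+1.
  move=> jK; have j1k : (j.+1 < k)%N by rewrite kK ltnS.
  by have [/andP[_ ajt] _] := a_step _ (ltnW j1k); apply: le_lt_trans ajt (a_gt _ _ j1k).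
have t_incrK j : (j < K)%N -> t j < t j.+1 by move=> jK; apply: t_incr; rewrite kK ltnS ltnW.
exists (pwlin K a t); split.
- exact: pwlin_time_change.
- apply: pwlin_dev => // j jK; have jk : (j < k)%N by rewrite kK ltnS.
  by have [/andP[tja _] aj] := a_step _ jk; rewrite distrC ger0_norm // subr_ge0.
move=> s s0 sT; have aK := a_gt _ K_gt0 Kk.
have [||i iK ai_s] := @exists_node_co _ K a s; [exact: s0 | by have := T_ge0; lra |].
rewrite /Q (qv_step t k x t_incr i _ _ (@pwlin_itv _ K a t t0 a_incr t_incrK i s iK ai_s)).
  by apply: qv_close_on_step; rewrite // kK ltnS.
by rewrite kK ltnS ltnW.
Qed.

End QVTimeChange.

Lemma separated_net {R : realType} (F : seq R) (h T : R) : 0 < h ->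
  (forall u, u \in F -> 0 <= u) ->
  exists G : seq R, exists2 gam : R, 0 < gam &
    [/\ {subset F <= G}, 0 \in G, (forall g, g \in G -> 0 <= g),
        {in G &, forall g g', g != g' -> gam <= `|g - g'|} & two_sided_net G h T].
Proof.
move=> h0 F_ge0; pose L := (Num.truncn (T / h)).+1.
pose G := [seq l%:R * h | l <- iota 0 L.+1] ++ F.
have grid_G l : (l <= L)%N -> l%:R * h \in G.
  move=> lL; rewrite mem_cat; apply/orP; left.
  by apply: (map_f (fun l : nat => l%:R * h)); rewrite mem_iota add0n ltnS.
have [gam gam0 G_sep] := seq_sep G.
exists G, gam => //; split => //.
- by move=> u uF; rewrite mem_cat uF orbT.
- by have := grid_G 0%N (leq0n _); rewrite mul0r.
- move=> g; rewrite mem_cat => /orP[/mapP[l _ ->]|/F_ge0//].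
  by apply: mulr_ge0 => //; apply: ltW.
move=> v /andP[v0 vT]; pose m := Num.truncn (v / h).
have /andP[mv vm] := truncn_itv (divr_ge0 v0 (ltW h0)).
rewrite ler_pdivlMr // ltr_pdivrMr // -/m -natr1 mulrDl mul1r in mv vm.
have mL : (m < L)%N by rewrite ltnS le_truncn // ler_pM2r ?invr_gt0.
split; [exists (m%:R * h) | exists (m.+1%:R * h)]; rewrite ?grid_G ?(ltnW mL) //.
- by rewrite mv andbT lerBlDr ltW.
- by rewrite -natr1 mulrDl mul1r ltW //= lerD2r.
Qed.

Lemma jump_sq_eventually {R : realType} (t : nat -> nat -> R) (k : nat -> nat) (x : R -> R)
    (u g : R) :
  (forall T eps : R, 0 < eps -> \forall n \near \oo, forall i, (i < k n)%N ->
     t n i <= T -> t n i.+1 - t n i <= eps) ->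
  0 < g -> x @ u^'+ --> x u -> cvg (x @ u^'-) ->
  \forall n \near \oo, forall j, (j < k n)%N -> t n j < u <= t n j.+1 ->
    jump x u ^+ 2 - g <= (x (t n j.+1) - x (t n j)) ^+ 2.
Proof.
move=> mesh g0 x_right x_left; have [rho rho0 near_u] := jump_sq_near _ _ _ g0 x_right x_left.
have rho2 : 0 < rho / 2 by rewrite divr_gt0.
near=> n.
have mesh_n : forall i, (i < k n)%N -> t n i <= u -> t n i.+1 - t n i <= rho / 2.
  by near: n; apply: mesh.
move=> j jk /andP[tju utj1]; have := mesh_n j jk (ltW tju).
by move=> dt; apply: near_u => //; lra.
Unshelve. all: by end_near.
Qed.

Lemma qv_J1_close_eventually {R : realType} (t : nat -> nat -> R) (k : nat -> nat)
    (x q : R -> R) (F G : seq R) (T eps eta h mu : R) :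
  partition_seq t k -> cadlag x ->
  (forall s, 0 <= s -> qv_n t k x ^~ s @ \oo --> q s) ->
  0 <= T -> 0 < eta -> 4 * eta <= eps -> 0 < mu -> mu <= h -> h <= 1 -> mu <= eps ->
  {in G &, forall g g', g != g' -> mu < `|g - g'|} -> (forall g, g \in G -> 0 <= g) ->
  0 \in G -> two_sided_net G h T ->
  uniq F -> {subset F <= G} -> (forall u, u \in F -> 0 < u <= T + 1) ->
  (forall a b, 0 <= a -> a <= b -> b <= T + 1 -> b - a <= 3 * h ->
     q b - q a <= \sum_(u <- F | a < u <= b) jump x u ^+ 2 + 2 * eta) ->
  \forall n \near \oo, exists lam, J1_close (qv_n t k x n) q T eps lam.
Proof.
move=> [t0 t_incr _ t_oo mesh] [x_right x_left] qv_cvg T0 eta0 eta_eps mu0 mu_h h1 mu_eps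
  G_sep G_ge0 G0 G_net F_uniq F_G F_range q_incr.
have qv_near : \forall n \near \oo, forall g, g \in G -> `|q g - qv_n t k x n g| <= eta.
  apply: near_forall_seq => g gG.
  by move/cvgrPdist_le: (qv_cvg g (G_ge0 g gG)); apply.
have jumps_near : \forall n \near \oo, forall u, u \in F -> forall j, (j < k n)%N ->
    t n j < u <= t n j.+1 -> jump x u ^+ 2 - eta <= (x (t n j.+1) - x (t n j)) ^+ 2.
  apply: near_forall_seq => u uF; have /andP[u0 _] := F_range u uF.
  exact: jump_sq_eventually mesh eta0 (x_right u (ltW u0)) (x_left u u0).
have horizon : \forall n \near \oo, T + 2 < t n (k n) by move/cvgryPgt: t_oo; apply.
near=> n.
apply: (@qv_J1_close R (t n) (k n) x q F G T eps eta h mu (t0 n) (t_incr n) _ _ T0 mu0 mu_h h1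
  mu_eps eta_eps G_sep G_ge0 G0 G_net F_uniq F_G F_range _ _ q_incr).
- by near: n; apply: mesh.
- by near: n.
- by near: n.
- by near: n.
Unshelve. all: by end_near.
Qed.

Lemma increment_le_finite_jumps {R : realType} (x q qc : R -> R) (T eta : R) :
  0 <= T -> 0 < eta -> {within `[0, +oo[, continuous qc} ->
  (forall s u, 0 <= s -> s <= u -> qc s <= qc u) ->
  (forall s, 0 <= s ->
    (\esum_(u in [set u : R | (0 < u <= s)%R]) ((jump x u) ^+ 2)%:E = (q s - qc s)%:E)%E) ->
  exists F : seq R, [/\ uniq F, (forall u, u \in F -> 0 < u <= T) &
    exists2 dl : R, 0 < dl & forall a b, 0 <= a -> a <= b -> b <= T -> b - a <= dl ->
      q b - q a <= \sum_(u <- F | a < u <= b) jump x u ^+ 2 + 2 * eta].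
Proof.
move=> T0 eta0 qc_cont qc_mono qc_jumps.
have [F [F_uniq F_range F_mass]] :=
  esum_finite_approx _ _ (fun u => sqr_ge0 (jump x u)) qc_jumps T eta eta0 T0.
have qc_cont_T : {within `[0, T], continuous qc}.
  by apply: continuous_subspaceW qc_cont => y /=; rewrite !in_itv /= andbT => /andP[].
have [dl dl0 qc_mod] := nondecreasing_unif_cont _ _ _ T0 eta0 qc_cont_T
  (fun s u s0 su _ => qc_mono s u s0 su).
exists F; split => //; exists dl => // a b a0 ab bT bad.
by have := F_mass a b a0 ab bT; have := qc_mod a b a0 ab bT bad; lra.
Qed.

Theorem proposition2p5 (R : realType) (t : nat -> nat -> R) (k : nat -> nat)
  (x q : R -> R) :
  partition_seq t k ->
  cadlag x ->
  (forall s, 0 <= s -> qv_n t k x ^~ s @ \oo --> q s) ->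
  (exists qc : R -> R,
     [/\ {within `[0, +oo[, continuous qc},
         (forall s u, 0 <= s -> s <= u -> qc s <= qc u) &
         (forall s, 0 <= s ->
            (\esum_(u in [set u : R | (0 < u <= s)%R]) ((jump x u) ^+ 2)%:E
              = (q s - qc s)%:E)%E)]) ->
  J1_cvg (qv_n t k x) q.
Proof.
move=> t_part x_cadlag qv_cvg [qc [qc_cont qc_mono qc_jumps]].
apply: J1_cvg_from_close => T eps T0 eps0.
pose eta := eps / 4; have eta0 : 0 < eta by rewrite divr_gt0.
have eta_eps : 4 * eta <= eps by rewrite /eta mulrC divfK ?pnatr_eq0.
have [F [F_uniq F_range [dl dl0 q_incr]]] :=
  increment_le_finite_jumps _ _ _ _ _ (addr_ge0 T0 ler01) eta0 qc_cont qc_mono qc_jumps.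
pose h := Num.min (dl / 3) 1.
have h0 : 0 < h by rewrite /h lt_min ltr01 andbT divr_gt0.
have [h_dl h1] : h <= dl / 3 /\ h <= 1 by rewrite /h !ge_min !lexx orbT.
clearbody h.
have [G [gam gam0 [F_G G0 G_ge0 G_sep G_net]]] :=
  separated_net F h T h0 (fun u uF => ltW (proj1 (andP (F_range u uF)))).
pose mu := Num.min (Num.min (gam / 2) h) eps.
have mu0 : 0 < mu by rewrite /mu !lt_min h0 eps0 !andbT divr_gt0.
have mu_gam : mu < gam.
  have : mu <= gam / 2 by rewrite /mu !ge_min lexx.
  lra.
have mu_h : mu <= h by rewrite /mu !ge_min lexx !orbT.
have mu_eps : mu <= eps by rewrite /mu ge_min lexx orbT.
apply: (qv_J1_close_eventually _ _ _ _ F G T eps eta h mu t_part x_cadlag qv_cvg T0 eta0 eta_eps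
  mu0 mu_h h1 mu_eps _ G_ge0 G0 G_net F_uniq F_G F_range).
- by move=> g g' gG g'G gg'; apply: lt_le_trans mu_gam (G_sep g g' gG g'G gg').
- by move=> a b a0 ab bT bh; apply: q_incr => //; lra.
Qed.
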